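(* Let $n \ge m$ be natural numbers and let $g(x)=a_m x^m + \dots + a_1 x + a_0$ be a polynomial with integer coefficients. Then \[ \sum_{k=0}^{n} g(k)\binom{n}{k}\, d(n-k) = \left(\sum_{i=0}^{m} a_i B_i\right) n!. \]
   Context: For a nonnegative integer $r$, $d(r)$ denotes the number of derangements of $\{1,\dots,r\}$ (permutations with no fixed point), with $d(0)=1$. $B_i$ denotes the $i$-th Bell number, the number of partitions of an $i$-element set into nonempty blocks, with $B_0=1$. *)

From mathcomp Require Import all_boot all_order all_algebra all_fingroup.
Set Implicit Arguments. Unset Strict Implicit. Unset Printing Implicit Defensive.
Import GRing.Theory Num.Theory.

Definition derange (r : nat) : nat :=
  #|[set s : 'S_r | [forall i : 'I_r, s i != i]]|.

(* B_i: number of partitions of an i-element set ('I_i) into nonempty blocks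
   (mathcomp's [partition] requires blocks to be nonempty). B_0 = 1. *)
Definition bell (i : nat) : nat :=
  #|[set P : {set {set 'I_i}} | partition P [set: 'I_i]]|.

(* Grouping the permutations of a finite set A by their set of moved points
   gives |A|! = sum_(M <= A) d(M), where d(M) counts the derangements of M; by
   strong induction on |A| this shows that d(M) only depends on |M|, and yields
   n! = sum_k C(n,k) d(n-k).  Since k C(n,k) = n C(n-1,k-1), shifting the index
   turns this into sum_k k^(j) C(n,k) d(n-k) = n! for every falling factorial
   k^(j) = k (k-1) ... (k-j+1) with j <= n.  Grouping the maps from an i-set to
   a k-set by their kernel gives k^i = sum_P k^(|P|) over the set partitions P
   of the i-set, so sum_k k^i C(n,k) d(n-k) = B_i n! for i <= n, and the
   theorem follows by linearity in g. *)

From mathcomp Require Import all_boot all_order all_algebra all_fingroup.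
Set Implicit Arguments. Unset Strict Implicit. Unset Printing Implicit Defensive.

Lemma sum_subsets_card (T : finType) (A : {set T}) (F : nat -> nat) :
  \sum_(M : {set T} | M \subset A) F #|M| = \sum_(k < #|A|.+1) 'C(#|A|, k) * F k.
Proof.
have card_lt (M : {set T}) : M \subset A -> #|M| < #|A|.+1.
  by move=> sMA; rewrite ltnS subset_leq_card.
rewrite (partition_big (fun M : {set T} => (inord #|M| : 'I_#|A|.+1)) predT) //=.
apply: eq_bigr => k _; rewrite -cards_draws -sum_nat_const.
apply: eq_big => [M | M /andP[sMA /eqP <-]]; last by rewrite inordK ?card_lt.
rewrite !inE; case sMA: (M \subset A) => //=.
by rewrite -val_eqE /= inordK ?card_lt.
Qed.

Section DerangementsOn.
Variable T : finType.

Definition derange_on (A : {set T}) : nat :=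
  #|[set s : {perm T} | perm_on A s & [forall x in A, s x != x]]|.

Lemma fact_card_sum_derange_on (A : {set T}) :
  #|A|`! = \sum_(M : {set T} | M \subset A) derange_on M.
Proof.
rewrite -card_perm -sum1_card.
rewrite (partition_big (fun s : {perm T} => [set x | s x != x])
                       (fun M => M \subset A)); last first.
  by move=> s sA; apply: subset_trans sA; apply/subsetP => x; rewrite inE.
apply: eq_bigr => M sMA; rewrite sum1dep_card; apply: eq_card => s.
rewrite !inE /perm_on; apply/andP/andP => [[_ /eqP <-] | [sM /forall_inP sMx]].
  split; first by apply/subsetP => x; rewrite !inE.
  by apply/forall_inP => x; rewrite inE.
split; first exact: subset_trans sM sMA.
rewrite eqEsubset; apply/andP; split; apply/subsetP => x; rewrite inE.
  by move=> sx; apply: (subsetP sM); rewrite inE.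
by move/sMx.
Qed.

Lemma derange_on_rec (A : {set T}) :
    (forall M : {set T}, M \proper A -> derange_on M = derange #|M|) ->
  derange_on A + \sum_(k < #|A|) 'C(#|A|, k) * derange k = #|A|`!.
Proof.
move=> derange_on_proper.
have sum_proper : \sum_(M : {set T} | (M \subset A) && (M != A)) derange #|M|
                  = \sum_(k < #|A|) 'C(#|A|, k) * derange k.
  have := sum_subsets_card A derange.
  by rewrite big_ord_recr (bigD1 A) //= binn mul1n addnC => /addIn.
rewrite fact_card_sum_derange_on [RHS](bigD1 A) //= -sum_proper; congr (_ + _).
apply: eq_bigr => M /andP[sMA nMA]; apply/esym/derange_on_proper.
by rewrite properEneq nMA.
Qed.

End DerangementsOn.

Lemma derange_on_setT (r : nat) : derange_on [set: 'I_r] = derange r.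
Proof.
apply: eq_card => s; rewrite !inE.
have -> : perm_on [set: 'I_r] s by apply/subsetP => x; rewrite inE.
by apply/forall_inP/forallP => sx x //; apply: sx.
Qed.

Lemma derange_onE (T : finType) (A : {set T}) : derange_on A = derange #|A|.
Proof.
move: {2}#|A|.+1 (ltnSn #|A|) => r; elim: r T A => [//|r IH] T A ltAr.
have IH_proper (U : finType) (B : {set U}) : #|B| <= r ->
    forall M : {set U}, M \proper B -> derange_on M = derange #|M|.
  by move=> leBr M ltMB; apply: IH; apply: leq_trans (proper_card ltMB) leBr.
(* [A] and ['I_#|A|] satisfy the same recursion [derange_on_rec]. *)
have := derange_on_rec (IH_proper _ _ ltAr).
have setT_le : #|[set: 'I_#|A|]| <= r by rewrite cardsT card_ord.
have := derange_on_rec (IH_proper _ _ setT_le).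
by rewrite cardsT card_ord derange_on_setT => <- /addIn.
Qed.

Lemma sum_binomial_derange (n : nat) :
  \sum_(0 <= k < n.+1) 'C(n, k) * derange (n - k) = n`!.
Proof.
transitivity (\sum_(k < n.+1) 'C(n, k) * derange k).
  rewrite big_nat_rev big_mkord; apply: eq_bigr => k _.
  by rewrite add0n subSS subKn ?bin_sub // -ltnS.
rewrite big_ord_recr /= binn mul1n addnC.
have := derange_on_rec (fun M _ => derange_onE M) (A := [set: 'I_n]).
by rewrite cardsT card_ord derange_on_setT.
Qed.

Lemma sum_ffact_binomial_derange (j n : nat) : j <= n ->
  \sum_(0 <= k < n.+1) k ^_ j * ('C(n, k) * derange (n - k)) = n`!.
Proof.
elim: j n => [|j IH] n le_jn.
  by rewrite -sum_binomial_derange; apply: eq_bigr => k _; rewrite ffactn0 mul1n.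
case: n le_jn => [//|n] le_jn.
rewrite big_nat_recl // ffact0n add0n factS -(IH n le_jn) big_distrr /=.
apply: eq_bigr => k _; rewrite ffactSS subSS.
rewrite -mulnA mulnCA (mulnA k.+1) -mul_bin_diag /=.
by rewrite [RHS]mulnCA !mulnA.
Qed.

Lemma leq_card_partition (T : finType) (P : {set {set T}}) (D : {set T}) :
  partition P D -> #|P| <= #|D|.
Proof.
move=> partP; rewrite (card_partition partP) -sum1_card.
by apply: leq_sum => B PB; rewrite card_gt0 (partition_neq0 partP PB).
Qed.

Section MapsWithGivenKernel.
Variables (T K : finType) (P : {set {set T}}).
Hypothesis partP : partition P [set: T].

Let coverP (x : T) : x \in cover P.
Proof. by rewrite (cover_partition partP) inE. Qed.

Let tiP : trivIset P := partition_trivIset partP.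

Lemma preim_partition_eqP (f : T -> K) :
  reflect (forall x y, (f x == f y) = (pblock P x == pblock P y))
          (preim_partition f [set: T] == P).
Proof.
apply: (iffP eqP) => [ker_f x y | same_f].
  rewrite eq_pblock ?coverP ?tiP // -ker_f pblock_equivalence_partition ?inE //.
  by split => // /eqP ->.
rewrite -(preim_partition_pblock partP); apply: eq_in_imset => x _.
by apply/setP => y; rewrite !inE same_f.
Qed.

Definition block : Type := {B : {set T} | B \in P}.

Definition block_of (x : T) : block :=
  exist _ (pblock P x) (pblock_mem (coverP x)).

Lemma block_nonempty (B : block) : exists x, x \in val B.
Proof. by case: B => B PB; apply/set0Pn; apply: partition_neq0 partP PB. Qed.

Definition block_rep (B : block) : T := xchoose (block_nonempty B).

Lemma block_of_rep (B : block) : block_of (block_rep B) = B.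
Proof.
apply: val_inj; case: B => B PB /=.
exact: def_pblock tiP PB (xchooseP (block_nonempty (exist _ B PB))).
Qed.

Lemma eq_block_of (x y : T) :
  (block_of x == block_of y) = (pblock P x == pblock P y).
Proof. by rewrite -val_eqE. Qed.

Definition lift_blocks (g : {ffun block -> K}) : {ffun T -> K} :=
  [ffun x => g (block_of x)].

Lemma lift_blocks_inj : injective lift_blocks.
Proof.
move=> g1 g2 /ffunP eq_g; apply/ffunP => B.
by have := eq_g (block_rep B); rewrite !ffunE block_of_rep.
Qed.

Lemma preim_partition_eq_image :
  [set f : {ffun T -> K} | preim_partition f [set: T] == P] =
  lift_blocks @: [set g : {ffun block -> K} | injectiveb g].
Proof.
apply/setP => f; rewrite inE; apply/preim_partition_eqP/imsetP => [same_f | ].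
  exists [ffun B => f (block_rep B)].
    rewrite inE; apply/injectiveP => B1 B2; rewrite !ffunE => /eqP.
    by rewrite same_f -eq_block_of !block_of_rep => /eqP.
  apply/ffunP => x; rewrite !ffunE; apply/eqP.
  by rewrite same_f -eq_block_of block_of_rep.
case=> g; rewrite inE => /injectiveP inj_g -> x y.
by rewrite !ffunE (inj_eq inj_g) eq_block_of.
Qed.

Lemma card_preim_partition_eq :
  #|[set f : {ffun T -> K} | preim_partition f [set: T] == P]| = #|K| ^_ #|P|.
Proof.
rewrite preim_partition_eq_image card_imset; last exact: lift_blocks_inj.
by rewrite card_inj_ffuns card_sig.
Qed.

End MapsWithGivenKernel.

Lemma card_ffun_sum_partitions (T K : finType) :
  #|K| ^ #|T| = \sum_(P : {set {set T}} | partition P [set: T]) #|K| ^_ #|P|.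
Proof.
rewrite -card_ffun -sum1_card.
rewrite (partition_big (fun f : {ffun T -> K} => preim_partition f [set: T])
           (fun P => partition P [set: T])) => [|f _]; last exact: preim_partitionP.
apply: eq_bigr => P partP; rewrite -(card_preim_partition_eq K partP) sum1dep_card.
by apply: eq_card => f; rewrite !inE.
Qed.

Lemma expn_sum_ffact_partitions (i k : nat) :
  k ^ i = \sum_(P : {set {set 'I_i}} | partition P [set: 'I_i]) k ^_ #|P|.
Proof. by have := card_ffun_sum_partitions 'I_i 'I_k; rewrite !card_ord. Qed.

Lemma sum_expn_binomial_derange (i n : nat) : i <= n ->
  \sum_(0 <= k < n.+1) k ^ i * ('C(n, k) * derange (n - k)) = bell i * n`!.
Proof.
move=> le_in.
under eq_bigr do rewrite expn_sum_ffact_partitions big_distrl /=.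
rewrite exchange_big /= /bell -sum1_card big_distrl /=.
apply: eq_big => [P | P partP]; first by rewrite inE.
rewrite mul1n sum_ffact_binomial_derange //.
by apply: leq_trans (leq_card_partition partP) _; rewrite cardsT card_ord.
Qed.

Import GRing.Theory Num.Theory.
Local Open Scope ring_scope.

Theorem theorem2 (n m : nat) (g : {poly int}) (hmn : (m <= n)%N)
  (hg : (size g <= m.+1)%N) :
  \sum_(0 <= k < n.+1) g.[k%:Z] * ('C(n, k) * derange (n - k))%:Z
  = (\sum_(0 <= i < m.+1) g`_i * (bell i)%:Z) * (n`!)%:Z.
Proof.
under eq_bigr do rewrite (horner_coef_wide _ hg) big_distrl /=.
rewrite exchange_big big_mkord big_distrl /=; apply: eq_bigr => i _.
have le_in : (i <= n)%N := leq_trans (ltnSE (ltn_ord i)) hmn.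
rewrite -mulrA -PoszM -(sum_expn_binomial_derange le_in).
rewrite (big_morph Posz PoszD (erefl 0%:Z)) big_distrr /=.
apply: eq_bigr => k _; rewrite -mulrA !PoszM; congr (_ * (_ * _)).
by rewrite -[RHS]natz natrX natz.
Qed.
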